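(* Let $m,n,s,k,c$ be positive integers such that $nc$ is even and $k$ is odd. If $\Gamma$ is an abelian group of order $nkc$ having exactly one involution, then there is no $\mathrm{MRS}_\Gamma(m,n;s,k;c)$.
   Context: For positive integers $m,n,s,k,c$ and an abelian group $\Gamma$ of order $nkc$, an $\mathrm{MRS}_\Gamma(m,n;s,k;c)$ is a set of $c$ partially filled $m\times n$ arrays (some cells may be empty) with entries in $\Gamma$ such that: every element of $\Gamma$ appears exactly once and in a unique array; in every array each row contains exactly $s$ filled cells and each column contains exactly $k$ filled cells; and there exist $\omega,\delta\in\Gamma$ such that in every array the sum of the entries of each row is $\omega$ and the sum of the entries of each column is $\delta$. An involution is an element of order $2$. *)

From HB Require Import structures.
From mathcomp Require Import all_boot all_order all_algebra.
Set Implicit Arguments. Unset Strict Implicit. Unset Printing Implicit Defensive.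
Import GRing.Theory.
Local Open Scope ring_scope.

(* An (partially filled) m x n array with entries in G is a function
   'I_m -> 'I_n -> option G (None = empty cell). *)

Definition arrays (G : finZmodType) (c m n : nat) :=
  'I_c -> 'I_m -> 'I_n -> option G.

Definition cellv (G : finZmodType) (x : option G) : G := odflt 0 x.

Definition involution (G : finZmodType) (x : G) : bool :=
  (x != 0) && (x + x == 0).

Definition is_MRS (G : finZmodType) (m n s k c : nat) (A : arrays G c m n) : Prop :=
  (forall g : G,
     #|[set t : 'I_c * 'I_m * 'I_n | A t.1.1 t.1.2 t.2 == Some g]| = 1%N) /\
  (forall (a : 'I_c) (i : 'I_m), #|[set j : 'I_n | A a i j != None]| = s) /\
  (forall (a : 'I_c) (j : 'I_n), #|[set i : 'I_m | A a i j != None]| = k) /\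
  (exists omega delta : G,
     (forall (a : 'I_c) (i : 'I_m), \sum_(j < n) cellv (A a i j) = omega) /\
     (forall (a : 'I_c) (j : 'I_n), \sum_(i < m) cellv (A a i j) = delta)).

(* If the abelian group G has a unique involution i, pairing every element
   with its opposite shows that the elements of G sum to i.  In an MRS each
   element of G occurs exactly once, so summing the entries column by column
   gives i = (c n) delta, where delta is the common column sum.  As k is odd
   and i + i = 0, i = k i = (n k c) delta = #|G| delta = 0, a contradiction. *)
From HB Require Import structures.
From mathcomp Require Import all_boot all_order all_algebra all_fingroup.
From mathcomp Require Import cyclic.
Set Implicit Arguments. Unset Strict Implicit. Unset Printing Implicit Defensive.
Import GRing.Theory.
Local Open Scope ring_scope.

Lemma mulrn_card (G : finZmodType) (x : G) : x *+ #|G| = 0.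
Proof. by have := expg_cardG (in_setT x); rewrite cardsT. Qed.

Lemma mulrn_odd (V : zmodType) (x : V) (k : nat) :
  x + x = 0 -> x *+ k = x *+ odd k.
Proof.
move=> xx0; rewrite -{1}(odd_double_half k) mulrnDr -mul2n mulrnA mulr2n xx0.
by rewrite mul0rn addr0.
Qed.

Lemma sumr_involution (T : finType) (V : zmodType) (f : T -> T) (F : T -> V) :
  involutive f -> (forall x, F (f x) = - F x) ->
  \sum_x F x = \sum_(x | f x == x) F x.
Proof.
(* Orient each pair {x, f x} by enumeration rank; opposite ends cancel. *)
move=> fK Fodd; pose r := @enum_rank T; pose P x := (r x < r (f x))%N.
rewrite (bigID P) (bigID (P \o f) (fun x => ~~ P x)) /=.
have -> : \sum_(x | ~~ P x && P (f x)) F x = - \sum_(x | P x) F x.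
  rewrite (reindex_inj (inv_inj fK)) -sumrN /=.
  apply: eq_big => x; last by rewrite Fodd.
  by rewrite /P fK andb_idl // => /ltnW; rewrite leqNgt.
rewrite addrA subrr add0r; apply: eq_bigl => x.
by rewrite /P fK -!leqNgt -eqn_leq (inj_eq val_inj) (inj_eq enum_rank_inj).
Qed.

Lemma sumr_unique_involution (V : finZmodType) (i : V) :
  [set x : V | involution x] = [set i] -> \sum_(x : V) x = i.
Proof.
move=> /setP invV; have selfinv x : (- x == x) = (x == 0) || (x == i).
  have := invV x; rewrite !inE /involution => <-.
  by rewrite eq_sym -addr_eq0; case: (x =P 0) => [->|]; rewrite ?addr0 ?eqxx.
have i_neq0 : i != 0.
  by have := invV i; rewrite !inE eqxx => /andP[].
rewrite (sumr_involution (F := id) opprK) // (bigD1 0) ?oppr0 //= add0r.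
apply: big_pred1 => x /=; rewrite selfinv.
by case: (x =P 0) => [->|]; rewrite ?eqxx ?andbT // eq_sym (negPf i_neq0).
Qed.

Lemma sum_cellv_exactly_once (T : finType) (G : finZmodType) (F : T -> option G) :
  (forall g, #|[set t | F t == Some g]| = 1%N) -> \sum_t cellv (F t) = \sum_g g.
Proof.
move=> once; have cellvE (x : option G) : cellv x = \sum_g g *+ (x == Some g).
  case: x => [h|] /=; last by rewrite big1.
  rewrite (bigD1 h) //= eqxx big1 ?addr0 // => g gh.
  by case: eqP => // -[hg]; rewrite hg eqxx in gh.
rewrite (eq_bigr _ (fun t _ => cellvE (F t))) exchange_big; apply: eq_bigr => g _.
rewrite sumrMnr -[RHS]mulr1n -(once g) -sum1_card [in RHS]big_mkcond /=.
by congr (_ *+ _); apply: eq_bigr => t _; rewrite inE; case: eqP.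
Qed.

Lemma sum_cellv_const_columns (G : finZmodType) (c m n : nat)
    (A : arrays G c m n) (delta : G) :
  (forall a j, \sum_(i < m) cellv (A a i j) = delta) ->
  \sum_(t : 'I_c * 'I_m * 'I_n) cellv (A t.1.1 t.1.2 t.2) = delta *+ (c * n).
Proof.
move=> col; rewrite -(pair_bigA _ (fun p j => cellv (A p.1 p.2 j))) /=.
rewrite -(pair_bigA _ (fun a i => \sum_j cellv (A a i j))) /=.
under eq_bigr => a _ do rewrite exchange_big /=.
under eq_bigr => a _ do under eq_bigr => j _ do rewrite col.
by rewrite !sumr_const !card_ord -mulrnA mulnC.
Qed.

Lemma MRS_sum_elements (G : finZmodType) (m n s k c : nat) (A : arrays G c m n) :
  is_MRS s k A -> exists delta : G, \sum_(g : G) g = delta *+ (c * n).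
Proof.
case=> once [_ [_ [_ [delta [_ col]]]]]; exists delta.
rewrite -(sum_cellv_exactly_once (F := fun t => A t.1.1 t.1.2 t.2) once).
exact: sum_cellv_const_columns.
Qed.

Theorem lemma3p6 (m n s k c : nat) (G : finZmodType) :
  (0 < m)%N -> (0 < n)%N -> (0 < s)%N -> (0 < k)%N -> (0 < c)%N ->
  ~~ odd (n * c) -> odd k ->
  #|G| = (n * k * c)%N ->
  #|[set x : G | involution x]| = 1%N ->
  ~ (exists A : arrays G c m n, is_MRS s k A).
Proof.
move=> _ _ _ _ _ _ k_odd cardG /eqP/cards1P[i invG] [A /MRS_sum_elements[delta]].
rewrite (sumr_unique_involution invG) => i_delta.
have /andP[i_neq0 /eqP ii0] : involution i by rewrite -in_set invG set11.
have : i *+ k = 0.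
  rewrite i_delta -mulrnA -(mulrn_card delta) cardG.
  by congr (_ *+ _); rewrite [RHS]mulnC mulnA.
by rewrite (mulrn_odd k ii0) k_odd; apply/eqP.
Qed.
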